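(* Let $G$ be a graph, $H$ a non-null subgraph of $G$, and let $n_0$ denote the maximum number of vertices in a connected component of $H$. For every independent set $I\subseteq V(G)\setminus V(H)$ of $G$ and every non-negative integer $k$ with $k\leq\alpha(H)-i(H-N(I))$, there exists an independent set $I_1\subseteq I$ with $|I_1|\leq kn_0$ such that $k\leq\alpha(H)-i(H-N(I_1))$.
   Context: All graphs are finite and simple; the null graph is allowed. For a graph $F$, $\alpha(F)$ is the maximum size of an independent set and $i(F)$ the minimum size of an inclusion-maximal independent set (both $0$ for the null graph). $N(I)=\bigcup_{v\in I}N_G(v)$ is the set of neighbors in $G$ of vertices of $I$, and $H-N(I)$ denotes the graph obtained from $H$ by deleting the vertices of $N(I)\cap V(H)$. *)

From mathcomp Require Import all_boot.
Set Implicit Arguments. Unset Strict Implicit. Unset Printing Implicit Defensive.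

Definition simple_graph (T : finType) (e : rel T) : Prop :=
  symmetric e /\ irreflexive e.

Definition subgraph (T : finType) (e : rel T) (VH : {set T}) (eH : rel T) : Prop :=
  [/\ symmetric eH, irreflexive eH,
      (forall x y, eH x y -> (x \in VH) && (y \in VH)) &
      (forall x y, eH x y -> e x y)].

Definition indep (T : finType) (r : rel T) (S : {set T}) : bool :=
  [forall x in S, forall y in S, ~~ r x y].

(* Graph F given by vertex set V and edge relation r (restricted to V). *)
Definition indep_in (T : finType) (V : {set T}) (r : rel T) (S : {set T}) : bool :=
  (S \subset V) && indep r S.

Definition maximal_indep (T : finType) (V : {set T}) (r : rel T) (S : {set T}) : bool :=
  indep_in V r S && [forall v in V :\: S, ~~ indep_in V r (v |: S)].

Definition alpha (T : finType) (V : {set T}) (r : rel T) : nat :=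
  \max_(S : {set T} | indep_in V r S) #|S|.

(* i(F): minimum size of an inclusion-maximal independent set (0 for the null graph) *)
Definition inum (T : finType) (V : {set T}) (r : rel T) : nat :=
  \big[minn/#|V|]_(S : {set T} | maximal_indep V r S) #|S|.

Definition nbhd (T : finType) (e : rel T) (I : {set T}) : {set T} :=
  [set y | [exists x in I, e x y]].

Definition max_comp (T : finType) (VH : {set T}) (eH : rel T) : nat :=
  \max_(x in VH) #|[set y in VH | connect eH x y]|.

From mathcomp Require Import all_boot order zify.

Set Implicit Arguments.
Unset Strict Implicit.
Unset Printing Implicit Defensive.

(* Take a minimum maximal independent set M of H - N(I). The gap alpha(U) - |M :&: U| is
   additive over unions of components U of H, so adding components one at a time yields a
   union U of at most k components with gap at least k. Keeping, for each vertex of U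
   dominated by I, one neighbour in I gives I1 with |I1| <= |U| and N(I1) = N(I) on U.
   Extending M :&: U to a maximal independent set of H - N(I1) cannot add vertices of U
   (they would contradict the maximality of M), so that set has at most
   |M :&: U| + alpha(H - U) <= alpha(H) - k vertices. *)

Section IndependentSets.

Variables (T : finType) (r : rel T).

Lemma indepP (S : {set T}) :
  reflect (forall x y, x \in S -> y \in S -> ~~ r x y) (indep r S).
Proof.
apply: (iffP forall_inP) => [indS x y xS yS | indS x xS].
  by have /forall_inP := indS x xS; apply.
by apply/forall_inP => y yS; apply: indS.
Qed.

Lemma indepS (S1 S2 : {set T}) : S1 \subset S2 -> indep r S2 -> indep r S1.
Proof.
by move=> /subsetP sS12 /indepP indS2; apply/indepP => x y /sS12 xS /sS12; apply: indS2.
Qed.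

Lemma indep_in0 (V : {set T}) : indep_in V r set0.
Proof. by rewrite /indep_in sub0set; apply/indepP => x y; rewrite in_set0. Qed.

Lemma leq_card_alpha (V S : {set T}) : indep_in V r S -> #|S| <= alpha V r.
Proof. exact: leq_bigmax_cond. Qed.

Lemma alpha_witness (V : {set T}) : exists2 S, indep_in V r S & #|S| = alpha V r.
Proof.
have [S indS maxS] := arg_maxnP (fun S : {set T} => #|S|) (indep_in0 V).
exists S => //; apply/eqP; rewrite eqn_leq leq_card_alpha //=.
by apply/bigmax_leqP => S' /maxS.
Qed.

Lemma alphaD_closed (U A : {set T}) : A \subset U -> closed r A ->
  alpha U r = alpha A r + alpha (U :\: A) r.
Proof.
move=> sAU clA; apply/eqP; rewrite eqn_leq; apply/andP; split.
  apply/bigmax_leqP => S /andP [sSU indS].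
  rewrite -(cardsID A S) leq_add // leq_card_alpha // /indep_in.
    by rewrite subsetIr (indepS (subsetIl _ _) indS).
  by rewrite setSD // (indepS (subsetDl _ _) indS).
have [SA /andP [sSA indSA] <-] := alpha_witness A.
have [SB /andP [sSB indSB] <-] := alpha_witness (U :\: A).
have outB y : y \in SB -> y \notin A by move/(subsetP sSB); rewrite inE => /andP [].
have disjAB : [disjoint SA & SB].
  rewrite disjoint_sym disjoints_subset; apply/subsetP => y /outB; rewrite inE.
  exact/contra/(subsetP sSA).
rewrite -cardsUI (disjoint_setI0 disjAB) cards0 addn0 leq_card_alpha //.
rewrite /indep_in subUset (subset_trans sSA sAU).
rewrite (subset_trans sSB (subsetDl _ _)) /=.
apply/indepP => x y /setUP [xA|xB] /setUP [yA|yB].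
- by move/indepP: indSA; apply.
- by apply: contraL (subsetP sSA x xA) => /clA ->; exact: outB.
- by apply: contraL (subsetP sSA y yA) => /clA <-; exact: outB.
- by move/indepP: indSB; apply.
Qed.

Lemma maximal_indep_superset (V S : {set T}) : indep_in V r S ->
  exists2 M, maximal_indep V r M & S \subset M.
Proof.
move=> indS.
pose P M := indep_in V r M && (S \subset M).
have [M /andP [indM sSM] maxM] :=
  @arg_maxnP _ S P (fun M => #|M|) (introT andP (conj indS (subxx S))).
exists M => //; rewrite /maximal_indep indM /=.
apply/forall_inP => v /setDP [vV vM]; apply/negP => indvM.
have := maxM (v |: M); rewrite /P indvM (subset_trans sSM (subsetUr _ _)) => /(_ isT).
by rewrite cardsU1 vM; lia.
Qed.

Lemma inum_witness (V : {set T}) :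
  exists2 M, maximal_indep V r M & #|M| <= inum V r.
Proof.
apply: (big_ind (fun n => exists2 M, maximal_indep V r M & #|M| <= n)).
- have [M maxM _] := maximal_indep_superset (indep_in0 V).
  by exists M => //; case/andP: maxM => /andP [/subset_leq_card].
- move=> m n [M maxM leMm] [N maxN leNn].
  by rewrite /minn; case: ltnP => _; [exists M | exists N].
- by move=> M maxM; exists M.
Qed.

Lemma inum_le_card (V M : {set T}) : maximal_indep V r M -> inum V r <= #|M|.
Proof.
move=> maxM; rewrite /inum -Order.NatOrder.minEnat.
exact: (@Order.TotalTheory.bigmin_le_cond _ nat _ #|V| M _ (fun S => #|S|) maxM).
Qed.

Hypothesis irr_r : irreflexive r.

Lemma inum_le_agree_on_closed (V0 V1 W U M : {set T}) :
  maximal_indep V0 r M -> closed r U -> {in U, V1 =i V0} -> V1 \subset W ->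
  inum V1 r <= #|M :&: U| + alpha (W :\: U) r.
Proof.
move=> /andP [/andP [sMV0 indM] maxM] clU agreeU sV1W.
have indMU : indep_in V1 r (M :&: U).
  rewrite /indep_in (indepS (subsetIl _ _) indM) andbT.
  by apply/subsetP => y /setIP [yM yU]; rewrite agreeU // (subsetP sMV0).
have [M1 maxM1 sMUM1] := maximal_indep_superset indMU.
have /andP [/andP [sM1V1 indM1] _] := maxM1.
have inM1 y : y \in M -> y \in U -> y \in M1.
  by move=> yM yU; rewrite (subsetP sMUM1) // inE yM.
have sM1UM : M1 :&: U \subset M :&: U.
  apply/subsetP => y /setIP [yM1 yU]; rewrite inE yU andbT.
  apply/negPn/negP => yM.
  have yV0 : y \in V0 by rewrite -agreeU // (subsetP sM1V1).
  move/forall_inP: maxM => /(_ y); rewrite inE yM yV0 => /(_ isT) /negP; apply.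
  rewrite /indep_in subUset sub1set yV0 sMV0 /=.
  apply/indepP => a b /setU1P [->|aM] /setU1P [->|bM].
  - by rewrite irr_r.
  - apply/negP => ryb; have bM1 := inM1 b bM (etrans (esym (clU _ _ ryb)) yU).
    by move/indepP: indM1 => /(_ y b yM1 bM1); rewrite ryb.
  - apply/negP => ray; have aM1 := inM1 a aM (etrans (clU _ _ ray) yU).
    by move/indepP: indM1 => /(_ a y aM1 yM1); rewrite ray.
  - by move/indepP: indM; apply.
have leM1out : #|M1 :\: U| <= alpha (W :\: U) r.
  rewrite leq_card_alpha // /indep_in (indepS (subsetDl _ _) indM1) andbT.
  by rewrite setSD // (subset_trans sM1V1).
rewrite (leq_trans (inum_le_card maxM1)) // -(cardsID U M1).
by rewrite leq_add // subset_leq_card.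
Qed.

End IndependentSets.

Section Components.

Variables (T : finType) (r : rel T) (VH : {set T}).
Hypothesis sym_r : symmetric r.
Hypothesis r_in_VH : forall x y, r x y -> (x \in VH) && (y \in VH).

Definition component (x : T) : {set T} := [set y in VH | connect r x y].

Lemma closed_VH : closed r VH.
Proof. by move=> x y /r_in_VH /andP [-> ->]. Qed.

Lemma component_closed x : closed r (component x).
Proof.
move=> y z ryz; rewrite !inE; case/andP: (r_in_VH ryz) => -> -> /=.
exact: (connect_closed (sym_connect_sym sym_r)).
Qed.

Lemma mem_component x : x \in VH -> x \in component x.
Proof. by move=> xVH; rewrite inE xVH connect0. Qed.

Lemma component_sub x (U : {set T}) : x \in U -> closed r U -> component x \subset U.
Proof.
move=> xU clU; apply/subsetP => y; rewrite inE => /andP [_ /(closed_connect clU)].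
by rewrite xU => <-.
Qed.

Lemma card_component_le x : x \in VH -> #|component x| <= max_comp VH r.
Proof. exact: leq_bigmax_cond. Qed.

Variable M : {set T}.
Hypothesis indM : indep r M.

Definition deficit (U : {set T}) : nat := alpha U r - #|M :&: U|.

Lemma leq_card_setI_alpha (U : {set T}) : #|M :&: U| <= alpha U r.
Proof. by rewrite leq_card_alpha // /indep_in subsetIr (indepS (subsetIl _ _) indM). Qed.

Lemma deficitD_closed (U A : {set T}) : A \subset U -> closed r A ->
  deficit U = deficit A + deficit (U :\: A).
Proof.
move=> sAU clA; rewrite /deficit (alphaD_closed sAU clA).
have cardMU : #|M :&: U| = #|M :&: A| + #|M :&: (U :\: A)|.
  by rewrite -(cardsID A (M :&: U)) -setIA (setIidPr sAU) setIDA.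
by move: (leq_card_setI_alpha A) (leq_card_setI_alpha (U :\: A)); lia.
Qed.

Lemma small_closed_subset_deficit n (U : {set T}) k :
  #|U| <= n -> U \subset VH -> closed r U -> k <= deficit U ->
  exists U' : {set T}, [/\ U' \subset U, closed r U', #|U'| <= k * max_comp VH r &
                 k <= deficit U'].
Proof.
elim: n U k => [|n IHn] U k cardU sUVH clU leKU.
  by exists U; split; rewrite // (leq_trans cardU).
case: k leKU => [|k] leKU.
  by exists set0; rewrite sub0set cards0; split=> // x y _; rewrite !inE.
have [U0|[x xU]] := set_0Vmem U.
  by exists U; split; rewrite // U0 cards0.
have xVH := subsetP sUVH x xU.
have sCU := component_sub xU clU.
have cardUC : #|U :\: component x| <= n.
  rewrite -ltnS (leq_trans _ cardU) // proper_card //; apply/properP.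
  by split; [exact: subsetDl | exists x => //; rewrite inE mem_component].
have sUCVH : U :\: component x \subset VH by exact: subset_trans (subsetDl _ _) sUVH.
have clUC : closed r (U :\: component x).
  by move=> y z ryz; rewrite !in_setD (clU _ _ ryz) (component_closed x ryz).
have defU := deficitD_closed sCU (component_closed x).
have [defC0|defC_gt0] := posnP (deficit (component x)).
  have [U2 [sU2 clU2 cardU2 defU2]] := IHn _ k.+1 cardUC sUCVH clUC ltac:(lia).
  by exists U2; split => //; exact: subset_trans sU2 (subsetDl _ _).
set k' := k.+1 - deficit (component x).
have [U2 [sU2 clU2 cardU2 defU2]] := IHn _ k' cardUC sUCVH clUC ltac:(lia).
have sCU' : component x \subset component x :|: U2 by exact: subsetUl.
have U2C : U2 :\: component x = U2.
  apply/setDidPl; rewrite disjoints_subset.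
  by apply/subsetP => y /(subsetP sU2); rewrite !inE => /andP [].
exists (component x :|: U2); split.
- by rewrite subUset sCU (subset_trans sU2 (subsetDl _ _)).
- by move=> y z ryz; rewrite !in_setU (component_closed x ryz) (clU2 _ _ ryz).
- rewrite (leq_trans (leq_card_setU _ _)) // mulSn leq_add ?card_component_le //.
  by rewrite (leq_trans cardU2) // leq_mul2r /k'; lia.
- by rewrite (deficitD_closed sCU' (component_closed x)) setDUl setDv set0U U2C; lia.
Qed.

End Components.

Lemma nbhd_on_small_subset (T : finType) (e : rel T) (I U : {set T}) :
  exists I1 : {set T},
    [/\ I1 \subset I, #|I1| <= #|U| & {in U, nbhd e I1 =i nbhd e I}].
Proof.
pose g y := odflt y [pick x in I | e x y].
have gP y : y \in nbhd e I -> (g y \in I) && e (g y) y.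
  rewrite inE => /existsP [x /andP [xI exy]].
  by rewrite /g; case: pickP => [z /andP [-> ->] //|/(_ x)]; rewrite xI exy.
have sI1I : g @: (U :&: nbhd e I) \subset I.
  by apply/subsetP => z /imsetP [y /setIP [_ /gP /andP [gyI _]] ->].
exists (g @: (U :&: nbhd e I)); split => //.
  exact: leq_trans (leq_imset_card _ _) (subset_leq_card (subsetIl _ _)).
move=> y yU; apply/idP/idP => [|yN]; rewrite !inE.
  case/existsP => x /andP [/(subsetP sI1I) xI exy].
  by apply/existsP; exists x; rewrite xI.
apply/existsP; exists (g y); case/andP: (gP y yN) => _ ->.
by rewrite andbT; apply/imsetP; exists y; rewrite // inE yU.
Qed.

Theorem lemma8 (T : finType) (e : rel T) (VH : {set T}) (eH : rel T) :
  simple_graph e -> subgraph e VH eH -> VH != set0 ->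
  forall I : {set T}, indep e I -> [disjoint I & VH] ->
  forall k : nat, k <= alpha VH eH - inum (VH :\: nbhd e I) eH ->
  exists I1 : {set T},
    [/\ I1 \subset I, indep e I1, #|I1| <= k * max_comp VH eH &
        k <= alpha VH eH - inum (VH :\: nbhd e I1) eH].
Proof.
move=> _ [sym_eH irr_eH eH_in_VH _] _ I indI _ [|k] leKI.
  by exists set0; rewrite sub0set cards0 (indepS (sub0set I) indI).
have [M maxM leMinum] := inum_witness eH (VH :\: nbhd e I).
have /andP [/andP [sMV0 indM] _] := maxM.
have sMVH : M \subset VH := subset_trans sMV0 (subsetDl _ _).
have defVH : k.+1 <= deficit eH M VH.
  by rewrite /deficit (setIidPl sMVH); lia.
have [U [sUVH clU cardU defU]] := small_closed_subset_deficit sym_eH eH_in_VH indM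
  (leqnn _) (subxx _) (closed_VH eH_in_VH) defVH.
have [I1 [sI1I cardI1 nbhdU]] := nbhd_on_small_subset e I U.
exists I1; split => //; first exact: indepS sI1I indI.
  exact: leq_trans cardI1 cardU.
have agreeU : {in U, VH :\: nbhd e I1 =i VH :\: nbhd e I}.
  by move=> y yU; rewrite !in_setD nbhdU.
have := inum_le_agree_on_closed irr_eH maxM clU agreeU (subsetDl _ _).
have := alphaD_closed sUVH clU; have := leq_card_setI_alpha indM U.
by move: defU; rewrite /deficit; lia.
Qed.
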